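(* Let $R$ be a radically finite ring and let $P$ be a prime ideal of $R$. If $P$ has finite height, then $P$ is finitely generated.
   Context: All rings are commutative with identity. An ideal $I$ of $R$ is called radically perfect if $\mathrm{ht}(I)=\inf\{n \mid \sqrt{I}=\sqrt{(\theta_1,\dots,\theta_n)} \text{ for some } \theta_1,\dots,\theta_n\in R\}$, and moreover, if $\mathrm{ht}(I)=0$, then $\sqrt{I}=\sqrt{(\theta)}$ for some zero divisor $\theta$ of $R$. A ring $R$ is called radically finite if every prime ideal $P$ of $R$ is radically perfect and, in addition, the set of ideals of $R$ that are generated by $\mathrm{ht}(P)$ elements and have radical $P$ has a maximal member $A$ such that there are only finitely many ideals in any chain of ideals between $A$ and $P$. *)

From mathcomp Require Import all_boot all_algebra.
Set Implicit Arguments. Unset Strict Implicit. Unset Printing Implicit Defensive.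
Import GRing.Theory.
Local Open Scope ring_scope.

Section RadFin.
Variable R : comNzRingType.

Definition sub_eq (I J : R -> Prop) : Prop := forall x, I x <-> J x.
Definition subset (I J : R -> Prop) : Prop := forall x, I x -> J x.
Definition ssubset (I J : R -> Prop) : Prop := subset I J /\ ~ subset J I.

Definition is_ideal (I : R -> Prop) : Prop :=
  [/\ I 0, (forall x y, I x -> I y -> I (x + y)) & (forall r x, I x -> I (r * x))].

Definition prime_ideal (P : R -> Prop) : Prop :=
  [/\ is_ideal P, ~ P 1 & (forall a b, P (a * b) -> P a \/ P b)].

Definition rad (I : R -> Prop) : R -> Prop := fun x => exists k : nat, I (x ^+ k).

Definition gen (m : nat) (theta : 'I_m -> R) : R -> Prop :=
  fun x => exists r : 'I_m -> R, x = \sum_(i < m) r i * theta i.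

Definition zero_divisor (t : R) : Prop := exists y : R, y != 0 /\ t * y = 0.

Definition prime_chain (P : R -> Prop) (n : nat) : Prop :=
  exists Q : nat -> (R -> Prop),
    [/\ (forall i, (i <= n)%N -> prime_ideal (Q i)),
        (forall i, (i < n)%N -> ssubset (Q i) (Q i.+1)) & sub_eq (Q n) P].

(* ht(I) >= n, where ht(I) = inf of ht(Q) over primes Q containing I
   (inf of the empty set = infinity) *)
Definition height_ge (I : R -> Prop) (n : nat) : Prop :=
  forall Q, prime_ideal Q -> subset I Q -> prime_chain Q n.

Definition height_eq (I : R -> Prop) (n : nat) : Prop :=
  height_ge I n /\ ~ height_ge I n.+1.

Definition radgen_ge (I : R -> Prop) (n : nat) : Prop :=
  forall (m : nat) (theta : 'I_m -> R), sub_eq (rad I) (rad (gen theta)) -> (n <= m)%N.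

Definition radically_perfect (I : R -> Prop) : Prop :=
  (forall n, height_ge I n <-> radgen_ge I n) /\
  (height_eq I 0 ->
     exists t : R, zero_divisor t /\
       sub_eq (rad I) (rad (gen (fun _ : 'I_1 => t)))).

Definition finitely_many (C : (R -> Prop) -> Prop) : Prop :=
  exists (k : nat) (f : 'I_k -> (R -> Prop)), forall J, C J -> exists i, sub_eq J (f i).

Definition chain_between (A P : R -> Prop) (C : (R -> Prop) -> Prop) : Prop :=
  (forall J, C J -> [/\ is_ideal J, subset A J & subset J P]) /\
  (forall J K, C J -> C K -> subset J K \/ subset K J).

Definition rad_gen_set (P : R -> Prop) (h : nat) (B : R -> Prop) : Prop :=
  (exists theta : 'I_h -> R, sub_eq B (gen theta)) /\ sub_eq (rad B) P.

Definition radically_finite : Prop :=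
  forall P, prime_ideal P ->
    radically_perfect P /\
    (forall h, height_eq P h ->
       exists A, [/\ rad_gen_set P h A,
         (forall B, rad_gen_set P h B -> subset A B -> subset B A) &
         (forall C, chain_between A P C -> finitely_many C)]).

Definition finitely_generated (I : R -> Prop) : Prop :=
  exists (m : nat) (theta : 'I_m -> R), sub_eq I (gen theta).

End RadFin.

From Pilot Require Import Defs.
From mathcomp Require Import all_boot all_algebra.
From Stdlib Require Import Classical ClassicalEpsilon.

(** If P were not finitely generated, then starting from the finitely
    generated ideal A of the definition (A <= P since rad A = P) and adjoining
    at each step an element of P outside the current ideal, we would obtain an
    infinite strictly ascending chain of ideals between A and P, contradicting
    the finiteness of chains between A and P. *)

Set Implicit Arguments. Unset Strict Implicit. Unset Printing Implicit Defensive.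
Import GRing.Theory.
Local Open Scope ring_scope.

Section FinitelyGenerated.
Variable R : comNzRingType.

Definition adjoin (I : R -> Prop) (x : R) : R -> Prop :=
  fun y => exists z r, I z /\ y = z + r * x.

Lemma gen_ideal m (theta : 'I_m -> R) : is_ideal (gen theta).
Proof.
split.
- by exists (fun _ => 0); rewrite big1 // => i _; rewrite mul0r.
- move=> _ _ [r1 ->] [r2 ->]; exists (fun i => r1 i + r2 i).
  by rewrite -big_split; apply: eq_bigr => i _; rewrite mulrDl.
- move=> a _ [r ->]; exists (fun i => a * r i).
  by rewrite mulr_sumr; apply: eq_bigr => i _; rewrite mulrA.
Qed.

Lemma finitely_generated_ideal (I : R -> Prop) :
  finitely_generated I -> is_ideal I.
Proof.
case=> m [theta HI]; have [g0 gD gM] := gen_ideal theta; split.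
- exact/HI.
- by move=> x y /HI Ix /HI Iy; apply/HI/gD.
- by move=> r x /HI Ix; apply/HI/gM.
Qed.

Lemma finitely_generated_adjoin (I : R -> Prop) x :
  finitely_generated I -> finitely_generated (adjoin I x).
Proof.
case=> m [theta HI].
have splitl (j : 'I_m) : split (lshift 1 j) = inl j := unsplitK (inl j).
have splitr (k : 'I_1) : split (rshift m k) = inr k := unsplitK (inr k).
exists (m + 1)%N, (fun i => if split i is inl j then theta j else x) => y.
split.
- case=> _ [a [/HI [r ->] ->]].
  exists (fun i => if split i is inl j then r j else a).
  rewrite big_split_ord big_ord1 splitr; congr (_ + _).
  by apply: eq_bigr => j _; rewrite splitl.
- case=> c ->; rewrite big_split_ord big_ord1 splitr.
  exists (\sum_(j < m) c (lshift 1 j) * theta j), (c (rshift m ord0)).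
  split; last by congr (_ + _); apply: eq_bigr => j _; rewrite splitl.
  by apply/HI; exists (fun j => c (lshift 1 j)).
Qed.

Lemma subset_adjoin (I : R -> Prop) x : Defs.subset I (adjoin I x).
Proof. by move=> y Iy; exists y, 0; rewrite mul0r addr0. Qed.

Lemma adjoin_mem (I : R -> Prop) x : is_ideal I -> adjoin I x x.
Proof. by case=> I0 _ _; exists 0, 1; rewrite add0r mul1r. Qed.

Lemma adjoin_subset (I P : R -> Prop) x :
  is_ideal P -> Defs.subset I P -> P x -> Defs.subset (adjoin I x) P.
Proof. by case=> _ PD PM IP Px _ [z [r [/IP Pz ->]]]; apply/PD/PM. Qed.

Section AscendingChain.
Variable J : nat -> R -> Prop.
Hypothesis J_step : forall n, ssubset (J n) (J n.+1).

Lemma ascending_subset m n : (m <= n)%N -> Defs.subset (J m) (J n).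
Proof.
move/subnKC <-; elim: (n - m)%N => [|d IH]; first by rewrite addn0.
by move=> y /IH; rewrite addnS; case: (J_step (m + d)) => + _; apply.
Qed.

Lemma ascending_neq m n : (m < n)%N -> ~ sub_eq (J m) (J n).
Proof.
move=> mn eq_mn; case: (J_step m) => _; apply=> y /(ascending_subset mn).
by move/eq_mn.
Qed.

Lemma ascending_chain_between (A P : R -> Prop) :
    (forall n, is_ideal (J n)) -> Defs.subset A (J 0) ->
    (forall n, Defs.subset (J n) P) ->
  chain_between A P (fun K => exists n, sub_eq K (J n)).
Proof.
move=> J_ideal AJ JP; split.
- move=> K [n KJ]; split.
  + have [J0 JD JM] := J_ideal n; split; first exact/KJ.
    * by move=> y z /KJ Jy /KJ Jz; apply/KJ/JD.
    * by move=> r y /KJ Jy; apply/KJ/JM.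
  + by move=> y /AJ /(ascending_subset (leq0n n)) /KJ.
  + by move=> y /KJ /JP.
- move=> K L [m KJ] [n LJ]; case: (leqP m n) => [mn | /ltnW nm].
  + by left=> y /KJ /(ascending_subset mn) /LJ.
  + by right=> y /LJ /(ascending_subset nm) /KJ.
Qed.

Lemma ascending_not_finitely_many :
  ~ finitely_many (fun K => exists n, sub_eq K (J n)).
Proof.
case=> k [f Jf].
have [g Jg] :
    exists g : 'I_k.+1 -> 'I_k, forall n : 'I_k.+1, sub_eq (J n) (f (g n)).
  apply: (@fin_all_exists _ _ (fun (n : 'I_k.+1) i => sub_eq (J n) (f i))).
  by move=> n; apply: Jf; exists n.
have [/injectiveP g_inj | /injectivePn [m [n mn gmn]]] := boolP (injectiveb g).
  by have := leq_card g g_inj; rewrite !card_ord ltnn.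
have eq_Jmn : sub_eq (J m) (J n) by move=> y; rewrite Jg gmn -Jg.
have [lt_mn | lt_nm | /val_inj eq_mn] := ltngtP m n.
- exact: ascending_neq lt_mn eq_Jmn.
- by apply: ascending_neq lt_nm _ => y; rewrite eq_Jmn.
- by rewrite eq_mn eqxx in mn.
Qed.

End AscendingChain.

Lemma not_finitely_generated_escape (P I : R -> Prop) :
    ~ finitely_generated P -> finitely_generated I -> Defs.subset I P ->
  exists x, P x /\ ~ I x.
Proof.
move=> P_nfg [m [theta HI]] IP; apply: NNPP => no_escape; apply: P_nfg.
exists m, theta => y; rewrite -HI; split; last exact: IP.
by move=> Py; apply: NNPP => nIy; apply: no_escape; exists y.
Qed.

Lemma not_finitely_generated_ascending_chain (P A : R -> Prop) :
    is_ideal P -> ~ finitely_generated P ->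
    finitely_generated A -> Defs.subset A P ->
  exists J : nat -> R -> Prop,
    [/\ J 0%N = A, forall n, ssubset (J n) (J n.+1),
        forall n, finitely_generated (J n) & forall n, Defs.subset (J n) P].
Proof.
move=> P_ideal P_nfg A_fg AP.
have [escape escapeP] : exists escape : (R -> Prop) -> R, forall I,
    finitely_generated I -> Defs.subset I P -> P (escape I) /\ ~ I (escape I).
  apply: (choice (fun I x => finitely_generated I -> Defs.subset I P ->
                             P x /\ ~ I x)) => I.
  have [I_fg | I_nfg] := classic (finitely_generated I); last by exists 0.
  have [IP | nIP] := classic (Defs.subset I P); last by exists 0.
  by have [x Px] := not_finitely_generated_escape P_nfg I_fg IP; exists x.
pose J n := iter n (fun I => adjoin I (escape I)) A.
have J_fgP n : finitely_generated (J n) /\ Defs.subset (J n) P.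
  elim: n => [|n [J_fg JP]] //=; split; first exact: finitely_generated_adjoin.
  have [Pe _] := escapeP _ J_fg JP.
  exact: adjoin_subset P_ideal JP Pe.
exists J; split=> // n; have [J_fg JP] := J_fgP n; [split | by [] ..].
- exact: subset_adjoin.
- have [_ J_escape] := escapeP _ J_fg JP.
  by move=> JS; apply/J_escape/JS/adjoin_mem/finitely_generated_ideal.
Qed.

End FinitelyGenerated.

Theorem theorem2p1 (R : comNzRingType) (P : R -> Prop) :
  radically_finite R -> prime_ideal P ->
  (exists h : nat, height_eq P h) ->
  finitely_generated P.
Proof.
move=> R_radfin P_prime [h P_height].
have [_ minimal_gen] := R_radfin P P_prime.
have [A [[[theta A_gen] radA] _ A_chains]] := minimal_gen h P_height.
have A_fg : finitely_generated A by exists h, theta.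
have AP : Defs.subset A P by move=> x Ax; apply/radA; exists 1%N; rewrite expr1.
have [P_ideal _ _] := P_prime.
apply: NNPP => P_nfg.
have [J [J0 J_step J_fg JP]] :=
  not_finitely_generated_ascending_chain P_ideal P_nfg A_fg AP.
apply: (ascending_not_finitely_many J_step); apply: A_chains.
apply: (ascending_chain_between J_step) => //.
- by move=> n; apply: finitely_generated_ideal.
- by rewrite J0.
Qed.
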